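(* Let $A=(a^k)_{k\in[n]}$ be a finite collection (multiset) of points $a^k=(a^k_1,a^k_2)\in[0,1]^2$, $n\ge 1$. Then $A$ admits at least one boundaries-included average fixed point, i.e., a point $x\in[0,1]^2$ with $\operatorname{avg}(A\setminus A_{<,<}(x))=x$.
   Context: For a finite nonempty multiset $B\subset[0,1]^2$, $\operatorname{avg}(B)=\frac{1}{|B|}\sum_{b\in B}b$ (counted with multiplicity). For $x\in[0,1]^2$, $A_{<,<}(x)=\{a\in A: a_1<x_1,\ a_2<x_2\}$ (as a sub-multiset of $A$), and $A\setminus A_{<,<}(x)$ is the sub-multiset of the remaining elements. *)

From mathcomp Require Import all_boot all_order all_algebra.
From mathcomp Require Import reals.
Set Implicit Arguments. Unset Strict Implicit. Unset Printing Implicit Defensive.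
Import Order.TTheory GRing.Theory Num.Theory.
Local Open Scope ring_scope.

(* Points of the plane are pairs (x1, x2) : R * R; multisets are sequences. *)

Definition in_unit_square (R : realType) (a : R * R) : bool :=
  [&& 0 <= a.1, a.1 <= 1, 0 <= a.2 & a.2 <= 1].

Definition ltlt (R : realType) (x a : R * R) : bool := (a.1 < x.1) && (a.2 < x.2).

Definition compl_ltlt (R : realType) (A : seq (R * R)) (x : R * R) : seq (R * R) :=
  [seq a <- A | ~~ ltlt x a].

Definition avg (R : realType) (B : seq (R * R)) : R * R :=
  ((\sum_(b <- B) b.1) / (size B)%:R, (\sum_(b <- B) b.2) / (size B)%:R).

From mathcomp Require Import all_boot all_order all_algebra.
From mathcomp Require Import reals.
From mathcomp Require Import lra.
Set Implicit Arguments. Unset Strict Implicit. Unset Printing Implicit Defensive.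
Import Order.TTheory GRing.Theory Num.Theory.
Local Open Scope ring_scope.

(** Start from x = avg A and repeatedly replace x by the average of the points
    of the current multiset that are not strictly below it (in both coordinates).
    Discarding points below the average can only raise the average, so every
    point discarded so far stays strictly below x; hence the current multiset is
    always A \ A_{<,<}(x) for the previous x.  A point not strictly below the
    average always exists, so the multiset never becomes empty, and its size
    strictly decreases until no point is discarded: x is then a fixed point. *)

Lemma sumr_const_seq (V : nmodType) (T : Type) (s : seq T) (c : V) :
  \sum_(b <- s) c = c *+ size s.
Proof. by rewrite big_const_seq count_predT -Monoid.iteropE. Qed.

Section Mean.
Variables (R : realFieldType) (T : eqType) (f : T -> R).
Implicit Types (s : seq T) (c : R).

Definition mean s : R := (\sum_(b <- s) f b) / (size s)%:R.

Lemma mean_le c s :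
  (0 < size s)%N -> (forall b, b \in s -> f b <= c) -> mean s <= c.
Proof.
move=> s_gt0 le_fc; rewrite ler_pdivrMr ?ltr0n // mulr_natr -sumr_const_seq.
by rewrite big_seq [leRHS]big_seq; apply: ler_sum.
Qed.

Lemma le_mean c s :
  (0 < size s)%N -> (forall b, b \in s -> c <= f b) -> c <= mean s.
Proof.
move=> s_gt0 le_cf; rewrite ler_pdivlMr ?ltr0n // mulr_natr -sumr_const_seq.
by rewrite big_seq [leRHS]big_seq; apply: ler_sum.
Qed.

Lemma has_mean_le s : (0 < size s)%N -> has (fun b => mean s <= f b) s.
Proof.
move=> s_gt0; apply/negPn/negP; rewrite -all_predC => /allP lt_f_mean.
have : \sum_(b <- s) f b < \sum_(b <- s) mean s.
  rewrite big_seq [ltRHS]big_seq; apply: ltr_sum => [|b /lt_f_mean].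
    by case: s s_gt0 {lt_f_mean} => //= b s _; rewrite inE eqxx.
  by rewrite /= -ltNge.
by rewrite sumr_const_seq -mulr_natr divfK ?ltxx // pnatr_eq0 -lt0n.
Qed.

Lemma mean_le_mean_filter (q : pred T) s :
  has q s -> (forall b, b \in s -> ~~ q b -> f b <= mean s) ->
  mean s <= mean [seq b <- s | q b].
Proof.
move=> has_q le_drop_mean.
have s_gt0 : (0 < size s)%N by case: s has_q {le_drop_mean}.
have sum_s : \sum_(b <- s) f b = mean s * (count q s + count (predC q) s)%:R.
  by rewrite count_predC divfK // pnatr_eq0 -lt0n.
have sum_drop : \sum_(b <- s | ~~ q b) f b <= mean s * (count (predC q) s)%:R.
  rewrite mulr_natr -size_filter -sumr_const_seq.
  rewrite big_filter [leLHS]big_seq_cond [leRHS]big_seq_cond.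
  by apply: ler_sum => b /andP[bs nqb]; apply: le_drop_mean.
have sum_split : \sum_(b <- s) f b =
    \sum_(b <- [seq b <- s | q b]) f b + \sum_(b <- s | ~~ q b) f b.
  by rewrite big_filter (bigID q).
(* The dropped part sums to at most mean s per element, so the kept part
   sums to at least mean s per element. *)
move: sum_s; rewrite natrD sum_split => sum_s.
rewrite ler_pdivlMr ?size_filter ?ltr0n -?has_count //; lra.
Qed.

End Mean.

Section Average.
Variable R : realType.
Implicit Types (S : seq (R * R)) (x b : R * R).

Lemma avgE S : avg S = (mean fst S, mean snd S).
Proof. by []. Qed.

Lemma avg_in_unit_square S :
  (0 < size S)%N -> all (@in_unit_square R) S -> in_unit_square (avg S).
Proof.
move=> S_gt0 /allP S01.
have coord01 b : b \in S -> [/\ 0 <= b.1, b.1 <= 1, 0 <= b.2 & b.2 <= 1].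
  by move/S01/and4P.
rewrite /in_unit_square avgE /=; apply/and4P; split.
- by apply: le_mean => // b /coord01[].
- by apply: mean_le => // b /coord01[].
- by apply: le_mean => // b /coord01[].
- by apply: mean_le => // b /coord01[].
Qed.

Lemma has_compl_ltlt_avg S :
  (0 < size S)%N -> has (fun b => ~~ ltlt (avg S) b) S.
Proof.
move=> /(has_mean_le fst) /hasP[b bS le_b]; apply/hasP; exists b => //.
by rewrite /ltlt negb_and -leNgt le_b.
Qed.

Lemma ltlt_avg_compl S b :
  (0 < size S)%N -> ltlt (avg S) b ->
  ltlt (avg [seq a <- S | ~~ ltlt (avg S) a]) b.
Proof.
move=> S_gt0 /andP[b1_lt b2_lt]; have has_keep := has_compl_ltlt_avg S_gt0.
apply/andP; split.
- apply: (lt_le_trans b1_lt); apply: mean_le_mean_filter => // a _.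
  by rewrite negbK => /andP[/ltW].
- apply: (lt_le_trans b2_lt); apply: mean_le_mean_filter => // a _.
  by rewrite negbK => /andP[_ /ltW].
Qed.

End Average.

Section FixedPoint.
Variables (R : realType) (A : seq (R * R)).
Hypothesis A01 : all (@in_unit_square R) A.

Lemma avg_fixed_point_of_filter (p : pred (R * R)) :
  has p A ->
  (forall a, a \in A -> ~~ p a -> ltlt (avg [seq a <- A | p a]) a) ->
  exists x : R * R,
    [/\ in_unit_square x, (0 < size (compl_ltlt A x))%N & avg (compl_ltlt A x) = x].
Proof.
have [n] := ubnP (size [seq a <- A | p a]); elim: n p => // n IHn p.
set S := [seq a <- A | p a]; set x := avg S => S_lt has_p dropped_lt.
have S_gt0 : (0 < size S)%N by rewrite size_filter -has_count.
have compl_x : compl_ltlt A x = [seq b <- S | ~~ ltlt x b].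
  rewrite /compl_ltlt /S -filter_predI; apply: eq_in_filter => a aA /=.
  by case: (boolP (p a)) => [|/(dropped_lt a aA) ->]; rewrite ?andbT.
have [keep_all | /allPn[b bS /negPn x_b]] := boolP (all (fun b => ~~ ltlt x b) S).
  exists x; rewrite compl_x (all_filterP keep_all); split => //.
  apply: avg_in_unit_square => //; apply/allP => b.
  by rewrite mem_filter => /andP[_ /(allP A01)].
have S'E : [seq a <- A | p a && ~~ ltlt x a] = [seq b <- S | ~~ ltlt x b].
  by rewrite /S -filter_predI; apply: eq_filter => a; rewrite /= andbC.
apply: (IHn (fun a => p a && ~~ ltlt x a)); rewrite ?S'E.
- rewrite -ltnS (leq_trans _ S_lt) // ltnS size_filter.
  rewrite -(count_predC (fun b => ~~ ltlt x b)) -[X in (X < _)%N]addn0 ltn_add2l.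
  by rewrite -has_count; apply/hasP; exists b; rewrite //= negbK.
- by rewrite has_count -size_filter S'E size_filter -has_count has_compl_ltlt_avg.
- move=> a aA keep_a; apply: ltlt_avg_compl => //.
  by case: (boolP (p a)) keep_a => [_ /negPn | /(dropped_lt a aA)].
Qed.

End FixedPoint.

Theorem lemma1 (R : realType) (A : seq (R * R)) :
  (0 < size A)%N -> all (@in_unit_square R) A ->
  exists x : R * R,
    [/\ in_unit_square x, (0 < size (compl_ltlt A x))%N & avg (compl_ltlt A x) = x].
Proof.
move=> A_gt0 A01; apply: (avg_fixed_point_of_filter A01 (p := predT)).
  by case: A A_gt0 {A01}.
by move=> a _.
Qed.
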